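(* For every real $x>0$, $$2^{x-1}<\sum_{i=0}^{\lfloor x\rfloor}\binom{x}{i}\le 2^x.$$
   Context: For real $x$ and integer $i\ge0$, $\binom{x}{i}=x(x-1)\cdots(x-i+1)/i!$. *)

From Stdlib Require Import Reals Lra Lia ZArith.
Open Scope R_scope.

Fixpoint falling (x : R) (i : nat) : R :=
  match i with
  | O => 1
  | S k => falling x k * (x - INR k)
  end.

Definition gbinom (x : R) (i : nat) : R := falling x i / INR (fact i).

(* Floor of a real as an integer: Int_part x = up x - 1 is the floor. *)
Definition floorZ (x : R) : Z := Int_part x.

(* Pascal's rule [binom(x, i+1) = binom(x-1, i+1) + binom(x-1, i)] gives
   [S(x, n+1) = S(x-1, n+1) + S(x-1, n)] for the partial sums
   [S(y, n) = sum_(i <= n) binom(y, i)].  When [n+1 <= x] the term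
   [binom(x-1, n+1)] is a product of nonnegative factors, so
   [S(x, n+1) >= 2 S(x-1, n)], and induction on the floor of [x] from
   [S(x, 0) = 1 > 2^(x-1)] for [x < 1] yields the lower bound.

   The upper bound is the case [Y = 1] of [sum_(i <= n) binom(x, i) Y^i <= (1+Y)^x]
   for [n <= x] and [Y >= 0], proved by induction on [n]: the difference of the
   two sides vanishes at [Y = 0], and its derivative is [x] times the same
   difference for [(x-1, n-1)], hence nonnegative. *)

From Stdlib Require Import Reals Lra Lia ZArith.
From Coquelicot Require Import Coquelicot.
Open Scope R_scope.

Lemma falling_succ_shift x k : falling x (S k) = x * falling (x - 1) k.
Proof.
  induction k as [|k IH]; [simpl; ring|].
  change (falling x (S (S k))) with (falling x (S k) * (x - INR (S k))).
  rewrite IH, S_INR; simpl; ring.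
Qed.

Lemma falling_nonneg y k : INR k <= y + 1 -> 0 <= falling y k.
Proof.
  induction k as [|k IH]; intros Hk; simpl; [lra|].
  rewrite S_INR in Hk; apply Rmult_le_pos; [apply IH|]; lra.
Qed.

Lemma gbinom_0 x : gbinom x 0 = 1.
Proof. unfold gbinom; simpl; field. Qed.

Lemma gbinom_nonneg y k : INR k <= y + 1 -> 0 <= gbinom y k.
Proof.
  intros Hk; unfold gbinom; apply Rmult_le_pos; [now apply falling_nonneg|].
  apply Rlt_le, Rinv_0_lt_compat, lt_0_INR, lt_O_fact.
Qed.

Lemma gbinom_succ_absorb x k : INR (S k) * gbinom x (S k) = x * gbinom (x - 1) k.
Proof.
  unfold gbinom; rewrite falling_succ_shift.
  change (fact (S k)) with (S k * fact k)%nat; rewrite mult_INR.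
  field; split; [apply INR_fact_neq_0 | apply not_0_INR; lia].
Qed.

Lemma gbinom_pascal x k : gbinom x (S k) = gbinom (x - 1) (S k) + gbinom (x - 1) k.
Proof.
  unfold gbinom; rewrite falling_succ_shift.
  change (falling (x - 1) (S k)) with (falling (x - 1) k * (x - 1 - INR k)).
  change (fact (S k)) with (S k * fact k)%nat; rewrite mult_INR, S_INR.
  field; split; [apply INR_fact_neq_0 | pose proof (pos_INR k); lra].
Qed.

Lemma sum_gbinom_pascal x n :
  sum_f_R0 (gbinom x) (S n) = sum_f_R0 (gbinom (x - 1)) (S n) + sum_f_R0 (gbinom (x - 1)) n.
Proof.
  induction n as [|n IH].
  - simpl; rewrite gbinom_pascal, !gbinom_0; ring.
  - change (sum_f_R0 (gbinom x) (S (S n))) with (sum_f_R0 (gbinom x) (S n) + gbinom x (S (S n))).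
    rewrite IH, (gbinom_pascal x (S n)); simpl; ring.
Qed.

Lemma Rpower_lt_sum_gbinom n x :
  INR n <= x < INR n + 1 -> Rpower 2 (x - 1) < sum_f_R0 (gbinom x) n.
Proof.
  revert x; induction n as [|n IH]; intros x Hx.
  - simpl in *; rewrite gbinom_0.
    apply Rlt_le_trans with (Rpower 2 0); [apply Rpower_lt | rewrite Rpower_O]; lra.
  - rewrite S_INR in Hx; rewrite sum_gbinom_pascal.
    change (sum_f_R0 (gbinom (x - 1)) (S n))
      with (sum_f_R0 (gbinom (x - 1)) n + gbinom (x - 1) (S n)).
    assert (Htop : 0 <= gbinom (x - 1) (S n)) by (apply gbinom_nonneg; rewrite S_INR; lra).
    assert (Hrec : Rpower 2 (x - 1 - 1) < sum_f_R0 (gbinom (x - 1)) n) by (apply IH; lra).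
    replace (x - 1) with ((x - 1 - 1) + 1) at 1 by ring.
    rewrite Rpower_plus, Rpower_1 by lra; lra.
Qed.

Lemma sum_pow_at_0 (c : nat -> R) n : sum_f_R0 (fun i => c i * 0 ^ i) n = c 0%nat.
Proof. induction n as [|n IH]; simpl; [ring|]; rewrite IH; ring. Qed.

Lemma is_derive_sum_pow (c : nat -> R) n y :
  is_derive (fun t => sum_f_R0 (fun i => c i * t ^ i) (S n)) y
    (sum_f_R0 (fun i => INR (S i) * c (S i) * y ^ i) n).
Proof.
  induction n as [|n IH].
  - simpl; auto_derive; [auto | ring].
  - change (sum_f_R0 (fun i => INR (S i) * c (S i) * y ^ i) (S n))
      with (sum_f_R0 (fun i => INR (S i) * c (S i) * y ^ i) n
            + INR (S (S n)) * c (S (S n)) * y ^ S n).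
    apply (is_derive_plus (fun t => sum_f_R0 (fun i => c i * t ^ i) (S n))
                          (fun t => c (S (S n)) * t ^ S (S n))); [exact IH|].
    auto_derive; [auto | simpl; ring].
Qed.

Lemma is_derive_Rpower_1plus x y :
  -1 < y -> is_derive (fun t => Rpower (1 + t) x) y (x * Rpower (1 + y) (x - 1)).
Proof.
  intros Hy; unfold Rpower; auto_derive; [lra|].
  replace (x * ln (1 + y)) with ((x - 1) * ln (1 + y) + ln (1 + y)) by ring.
  rewrite exp_plus, exp_ln by lra; field; lra.
Qed.

Lemma le_of_is_derive_nonneg (f df : R -> R) a b :
  a <= b -> (forall t, a <= t <= b -> is_derive f t (df t)) ->
  (forall t, a <= t <= b -> 0 <= df t) -> f a <= f b.
Proof.
  intros Hab Hd Hpos.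
  destruct (MVT_gen f a b df) as [c [Hc Hmvt]];
    rewrite ?Rmin_left, ?Rmax_right in * by lra.
  - intros t Ht; apply Hd; lra.
  - intros t Ht; apply continuity_pt_filterlim, (ex_derive_continuous f).
    exists (df t); apply Hd; lra.
  - assert (Hincr : 0 <= df c * (b - a)) by (apply Rmult_le_pos; [apply Hpos |]; lra).
    lra.
Qed.

Lemma sum_gbinom_pow_le_Rpower n x Y :
  INR n <= x -> 0 <= Y -> sum_f_R0 (fun i => gbinom x i * Y ^ i) n <= Rpower (1 + Y) x.
Proof.
  revert x Y; induction n as [|n IH]; intros x Y Hx HY.
  - simpl in *; rewrite gbinom_0, Rmult_1_r.
    apply Rle_trans with (Rpower (1 + Y) 0); [rewrite Rpower_O | apply Rle_Rpower]; lra.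
  - rewrite S_INR in Hx.
    set (gap x n t := Rpower (1 + t) x - sum_f_R0 (fun i => gbinom x i * t ^ i) n).
    enough (Hgap : gap x (S n) 0 <= gap x (S n) Y).
    { unfold gap in Hgap; rewrite sum_pow_at_0, gbinom_0, Rplus_0_r in Hgap.
      replace (Rpower 1 x) with 1 in Hgap
        by (unfold Rpower; rewrite ln_1, Rmult_0_r, exp_0; reflexivity).
      lra. }
    apply (le_of_is_derive_nonneg _ (fun t => x * gap (x - 1) n t)); [lra | |].
    + intros t Ht; unfold gap.
      replace (x * _) with (x * Rpower (1 + t) (x - 1)
        - sum_f_R0 (fun i => INR (S i) * gbinom x (S i) * t ^ i) n).
      * apply (is_derive_minus (fun t => Rpower (1 + t) x)); [apply is_derive_Rpower_1plus; lra|].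
        apply (is_derive_sum_pow (gbinom x)).
      * rewrite Rmult_minus_distr_l, scal_sum; f_equal.
        apply sum_eq; intros i _; rewrite gbinom_succ_absorb; ring.
    + intros t Ht; unfold gap; apply Rmult_le_pos; [pose proof (pos_INR n); lra|].
      assert (Hrec := IH (x - 1) t ltac:(lra) ltac:(lra)); lra.
Qed.

Lemma INR_floor_bounds x :
  0 <= x -> INR (Z.to_nat (floorZ x)) <= x < INR (Z.to_nat (floorZ x)) + 1.
Proof.
  intros Hx; destruct (base_Int_part x) as [Hlo Hhi].
  assert (Hnonneg : (0 <= Int_part x)%Z) by (apply Z.lt_pred_le, lt_IZR; simpl; lra).
  unfold floorZ; rewrite INR_IZR_INZ, Z2Nat.id by exact Hnonneg; lra.
Qed.

Theorem claimA2 (x : R) (hx : 0 < x) :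
  Rpower 2 (x - 1) < sum_f_R0 (fun i => gbinom x i) (Z.to_nat (floorZ x))
  /\ sum_f_R0 (fun i => gbinom x i) (Z.to_nat (floorZ x)) <= Rpower 2 x.
Proof.
  assert (Hfloor := INR_floor_bounds x ltac:(lra)).
  split; [now apply Rpower_lt_sum_gbinom|].
  replace 2 with (1 + 1) by ring.
  rewrite (sum_eq _ (fun i => gbinom x i * 1 ^ i)) by (intros i _; rewrite pow1; ring).
  apply sum_gbinom_pow_le_Rpower; lra.
Qed.
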